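(* Even for two teams with identical valuations and nonnegative-value players, there does not necessarily exist an allocation that is both EF1 and player-Pareto optimal.
   Context: Setting: teams $T=[n]$, players $P=\{p_1,\dots,p_m\}$. Each player $p$ has a complete, transitive weak preference $\succsim_p$ over $T$. Each team $i$ has an additive valuation $v_i:2^P\to\mathbb{R}$, $v_i(S)=\sum_{p\in S}v_i(p)$; nonnegative-value players means $v_i(p)\ge0$ for all $i,p$; identical valuations means $v_1=v_2=\dots=v_n$. An allocation is an ordered partition $(A_1,\dots,A_n)$ of $P$. $A$ is EF1 if for all distinct $i,j$ there are $X\subseteq A_i$, $Y\subseteq A_j$ with $|X\cup Y|\le1$ and $v_i(A_i\setminus X)\ge v_i(A_j\setminus Y)$. A player is better (worse) off in $A'$ than in $A$ if she strictly prefers (strictly disprefers) her team in $A'$ to her team in $A$. $A$ is player-Pareto dominated by $A'$ if no player is worse off and at least one player is better off; $A$ is player-Pareto optimal (player-PO) if it is not player-Pareto dominated by any allocation. *)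

From HB Require Import structures.
From mathcomp Require Import all_boot all_order all_algebra.
From mathcomp Require Import reals.
Set Implicit Arguments. Unset Strict Implicit. Unset Printing Implicit Defensive.
Import Order.TTheory GRing.Theory Num.Theory.
Local Open Scope ring_scope.

Section Alloc.
Variables (R : realType) (n m : nat).

(* pref p a b : player p weakly prefers team a to team b *)
Definition weak_order_prefs (pref : 'I_m -> rel 'I_n) : Prop :=
  forall p, (forall a b, pref p a b || pref p b a) /\
            (forall a b c, pref p a b -> pref p b c -> pref p a c).

Definition strict_pref (pref : 'I_m -> rel 'I_n) p a b : bool :=
  pref p a b && ~~ pref p b a.

(* An allocation (ordered partition of P into n bundles) is encoded by the
   function sending each player to her team. *)
Definition allocation := {ffun 'I_m -> 'I_n}.

Definition bundle (A : allocation) (i : 'I_n) : {set 'I_m} := [set p | A p == i].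

Definition value (v : 'I_n -> 'I_m -> R) (i : 'I_n) (S : {set 'I_m}) : R :=
  \sum_(p in S) v i p.

Definition EF1 (v : 'I_n -> 'I_m -> R) (A : allocation) : Prop :=
  forall i j : 'I_n, i != j ->
    exists X Y : {set 'I_m},
      [/\ X \subset bundle A i, Y \subset bundle A j, (#|X :|: Y| <= 1)%N &
          value v i (bundle A j :\: Y) <= value v i (bundle A i :\: X)].

Definition better_off pref (A' A : allocation) p := strict_pref pref p (A' p) (A p).
Definition worse_off pref (A' A : allocation) p := strict_pref pref p (A p) (A' p).

Definition player_dominated pref (A A' : allocation) : Prop :=
  (forall p, ~~ worse_off pref A' A p) /\ (exists p, better_off pref A' A p).

Definition player_PO pref (A : allocation) : Prop :=
  forall A' : allocation, ~ player_dominated pref A A'.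
End Alloc.

From HB Require Import structures.
From mathcomp Require Import all_boot all_order all_algebra.
From mathcomp Require Import reals.
Import Order.TTheory GRing.Theory Num.Theory.
Local Open Scope ring_scope.

(* Two players, two teams, every player valued 1 by both teams, and both
   players strictly preferring team 0.  Any allocation splitting the players
   is player-Pareto dominated by sending both to team 0; but that allocation
   is not EF1, since team 1 still envies team 0 after removing one player. *)

Section UnitValuation.
Variables (R : realType) (n m : nat).

Lemma value_unit (i : 'I_n) (S : {set 'I_m}) :
  value (fun _ _ => 1 : R) i S = #|S|%:R.
Proof. by rewrite /value sumr_const. Qed.

Lemma EF1_unit_card (A : allocation n m) (i j : 'I_n) :
  EF1 (fun _ _ => 1 : R) A -> i != j ->
  (#|bundle A j| <= #|bundle A i| + 1)%N.
Proof.
move=> hEF ij; have [X [Y [_ _ cardXY]]] := hEF i j ij.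
rewrite !value_unit ler_nat => le_diff.
have cardY : (#|Y| <= 1)%N by apply: leq_trans cardXY; apply/subset_leq_card/subsetUr.
have le_Bj : (#|bundle A j| <= #|bundle A j :\: Y| + #|Y|)%N.
  by rewrite -(cardsID Y (bundle A j)) setIC addnC leq_add2l subset_leq_card ?subsetIl.
apply: (leq_trans le_Bj); apply: leq_add cardY.
by apply: leq_trans le_diff _; apply/subset_leq_card/subsetDl.
Qed.

End UnitValuation.

Section LowestTeamFirst.
Variables (n m : nat).

Definition lowest_first : 'I_m -> rel 'I_n := fun _ a b => (a <= b)%N.

Lemma weak_order_lowest_first : weak_order_prefs lowest_first.
Proof. by move=> p; split=> [a b|a b c]; [exact: leq_total | exact: leq_trans]. Qed.

End LowestTeamFirst.

Lemma player_PO_lowest_first (n m : nat) (A : allocation n.+1 m) :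
  player_PO (@lowest_first n.+1 m) A -> forall p, A p = ord0.
Proof.
move=> hPO p; apply/eqP; apply/negPn/negP => Ap_ne0.
apply: (hPO [ffun=> ord0]); split=> [q|].
  by rewrite /worse_off /strict_pref ffunE /lowest_first leq0n andbF.
exists p; rewrite /better_off /strict_pref ffunE /lowest_first leq0n /= -ltnNge.
by rewrite lt0n; move: Ap_ne0; apply: contra => /eqP Ap0; apply/eqP/val_inj.
Qed.

Theorem proposition5 (R : realType) :
  exists (m : nat) (pref : 'I_m -> rel 'I_2) (v : 'I_2 -> 'I_m -> R),
    [/\ weak_order_prefs pref,
        (forall (i : 'I_2) (p : 'I_m), 0 <= v i p),
        (forall i j : 'I_2, v i = v j) &
        forall A : allocation 2 m, ~ (EF1 v A /\ player_PO pref A)].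
Proof.
exists 2%N, (@lowest_first 2 2), (fun _ _ => 1).
split=> //; first exact: weak_order_lowest_first.
move=> A [hEF /player_PO_lowest_first all_first].
have full0 : bundle A ord0 = setT by apply/setP => p; rewrite !inE all_first.
have empty1 : bundle A ord_max = set0.
  by apply/setP => p; rewrite !inE all_first.
have := @EF1_unit_card R _ _ A ord_max ord0 hEF isT.
by rewrite full0 empty1 cardsT cards0 card_ord.
Qed.
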